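(* Let $G<\operatorname{Aut}(T)$ be the group generated by the automorphisms $a,b,c$ of the $6$-ary rooted tree $T=\{1,\dots,6\}^*$ defined by $a=\langle\!\langle b^{-1},1,b,c^{-1},1,c\rangle\!\rangle(13)(25)(46)$, $b=\langle\!\langle b,b^{-1},1,c,c^{-1},1\rangle\!\rangle(2356)$, $c=(123)(456)$. Then $G$ is regular branch over the subgroup $H=\langle [b^2,c]^g : g\in G\rangle$.
   Context: $T$ is the tree of finite words over $X=\{1,\dots,6\}$; automorphisms act on the right, so $[g,h]=g^{-1}h^{-1}gh$ and $h^g=g^{-1}hg$. The wreath recursion $g=\langle\!\langle g_1,\dots,g_6\rangle\!\rangle\sigma$ means $(xv)^g=x^\sigma v^{g_x}$; it defines the homomorphism $\psi\colon G\to G^X\rtimes\operatorname{Sym}(X)$, $g\mapsto\langle\!\langle g|_1,\dots,g|_6\rangle\!\rangle\sigma_g$. A self-similar group $G$ is regular branch over a subgroup $H$ if $H$ has finite index in $G$ and $H^X=H\times\cdots\times H$ (6 factors, viewed as elements with trivial permutation) is contained in $\psi(H)$. *)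

From Stdlib Require List.
From mathcomp Require Import all_boot.
Set Implicit Arguments. Unset Strict Implicit. Unset Printing Implicit Defensive.

(* Alphabet X = {1,...,6} is 'I_6, letter k (1-based) is the ordinal k-1.
   Vertices of the tree T are words seq 'I_6. *)
Definition lab (k : nat) : 'I_6 := Ordinal (ltn_pmod k.-1 (isT : 0 < 6)).

Inductive gen := A | B | C | Ai | Bi | Ci.
Definition word := seq gen.

Definition inv_letter (g : gen) : gen :=
  match g with A => Ai | B => Bi | C => Ci | Ai => A | Bi => B | Ci => C end.
Definition inv_word (w : word) : word := rev (map inv_letter w).

(* Permutation sigma_g, given as the 1-based list of images of 1..6
   (right action, x^sigma). a=(13)(25)(46), b=(2356), c=(123)(456). *)
Definition perm_table (g : gen) : seq nat :=
  match g with
  | A  => [:: 3; 5; 1; 6; 2; 4]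
  | B  => [:: 1; 3; 5; 4; 6; 2]
  | C  => [:: 2; 3; 1; 5; 6; 4]
  | Ai => [:: 3; 5; 1; 6; 2; 4]
  | Bi => [:: 1; 6; 2; 4; 3; 5]
  | Ci => [:: 3; 1; 2; 6; 4; 5]
  end.
Definition sigma (g : gen) (x : 'I_6) : 'I_6 := lab (nth 1 (perm_table g) x).

Definition sec_pos (g : gen) (x : 'I_6) : word :=
  match g with
  | A => nth [::] [:: [:: Bi]; [::]; [:: B]; [:: Ci]; [::]; [:: C]] x
  | B => nth [::] [:: [:: B]; [:: Bi]; [::]; [:: C]; [:: Ci]; [::]] x
  | _ => [::]
  end.
(* For g = <<g_y>> sigma, (x v)^(g^-1) = x^(sigma^-1) v^((g_(x^(sigma^-1)))^-1). *)
Definition sec (g : gen) (x : 'I_6) : word :=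
  match g with
  | A | B | C => sec_pos g x
  | Ai | Bi | Ci => inv_word (sec_pos (inv_letter g) (sigma g x))
  end.

(* Image of the first letter and section of a word w = g1 g2 ... gn
   (right action: (gh)|_x = g|_x h|_(x^g)). *)
Fixpoint step (w : word) (x : 'I_6) : 'I_6 * word :=
  match w with
  | [::] => (x, [::])
  | g :: w' => let p := step w' (sigma g x) in (p.1, sec g x ++ p.2)
  end.

Fixpoint act (w : word) (v : seq 'I_6) {struct v} : seq 'I_6 :=
  match v with
  | [::] => [::]
  | x :: v' => (step w x).1 :: act (step w x).2 v'
  end.

Definition act_eq (w1 w2 : word) : Prop := forall v, act w1 v = act w2 v.

Definition in_gen (S : word -> Prop) (w : word) : Prop :=
  exists s : seq (word * bool),
    (forall p, List.In p s -> S p.1) /\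
    act_eq w (flatten [seq (if p.2 then p.1 else inv_word p.1) | p <- s]).

Definition conj_word (h g : word) : word := inv_word g ++ h ++ g.
Definition comm_word (g h : word) : word := inv_word g ++ inv_word h ++ g ++ h.

Definition inH (w : word) : Prop :=
  in_gen (fun u => exists g : word, u = conj_word (comm_word [:: B; B] [:: C]) g) w.

Definition finite_index (P : word -> Prop) : Prop :=
  exists reps : seq word, forall w : word,
    exists r, List.In r reps /\ P (w ++ inv_word r).

Definition regular_branch_over (P : word -> Prop) : Prop :=
  finite_index P /\
  forall hs : 'I_6 -> word, (forall x, P (hs x)) ->
    exists h : word, P h /\
      forall (x : 'I_6) (v : seq 'I_6), act h (x :: v) = x :: act (hs x) v.

(* Modulo H the commutator [b^2,c] vanishes, so b^2 is central in G/H. Together with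
   the relations a = cb, c^3 = 1, bc = c^2 b^-1 and (b^2 c)^3 = 1, which hold in G,
   this gives b^6 in H and puts every element of G in one of the 18 cosets H c^i b^j.
   For the branching, it suffices to find, for each vertex x of the first level and
   each u in H, an element of H acting as u below x and trivially elsewhere. The u
   admitting such a lift at the vertex 1 form a normal subgroup of G, because the
   stabiliser of 1 maps onto G through its section at 1; so it suffices to lift
   [b^2,c] itself, which is done by an explicit commutator. Conjugating by elements
   moving 1 to x handles the other vertices.
   Equalities in G are decided by checking that a word, and every word in a finite
   set of its freely reduced iterated sections, fixes the first level. *)

From HB Require Import structures.
From mathcomp Require Import all_boot.

Set Implicit Arguments. Unset Strict Implicit. Unset Printing Implicit Defensive.

Definition gen_eq_dec : comparable gen.
Proof. by move=> g h; rewrite /decidable; decide equality. Defined.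
HB.instance Definition _ := comparableMixin gen_eq_dec.

Lemma inv_letterK : involutive inv_letter. Proof. by case. Qed.

Lemma inv_word_cat u w : inv_word (u ++ w) = inv_word w ++ inv_word u.
Proof. by rewrite /inv_word map_cat rev_cat. Qed.

Lemma inv_wordK : involutive inv_word.
Proof. by move=> w; rewrite /inv_word map_rev revK (mapK inv_letterK). Qed.

Definition letters : seq 'I_6 := map lab (iota 1 6).

Lemma mem_letters x : x \in letters.
Proof.
apply/mapP; exists x.+1; first by rewrite mem_iota /= add1n ltnS ltn_ord.
by apply/val_inj; rewrite /= modn_small.
Qed.

Lemma letters_uniq : uniq letters.
Proof. by rewrite -(map_inj_uniq val_inj); vm_compute. Qed.

Lemma sigma_invK g : cancel (sigma g) (sigma (inv_letter g)).
Proof.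
suff sK : all (fun x => sigma (inv_letter g) (sigma g x) == x) letters.
  by move=> x; apply/eqP/(allP sK)/mem_letters.
by case: g; vm_compute.
Qed.

Lemma sec_inv g x : sec (inv_letter g) (sigma g x) = inv_word (sec g x).
Proof. by case: g; cbv [sec inv_letter]; rewrite ?(sigma_invK A) ?(sigma_invK B) ?inv_wordK. Qed.

Lemma step_cat u w x :
  step (u ++ w) x = ((step w (step u x).1).1, (step u x).2 ++ (step w (step u x).1).2).
Proof.
elim: u x => [|g u IH] x /=; first by case: (step w x).
by rewrite IH catA.
Qed.

Lemma step_inv w x : step (inv_word w) (step w x).1 = (x, inv_word (step w x).2).
Proof.
elim: w x => [|g w IH] x //=.
rewrite /inv_word /= rev_cons -cats1 -/(inv_word w) step_cat IH /=.
by rewrite sigma_invK sec_inv cats0 -/(inv_word _) inv_word_cat.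
Qed.

Lemma eq_step_fst w x y : ((step w x).1 == (step w y).1) = (x == y).
Proof.
apply/idP/eqP => [/eqP E | -> //].
by have := step_inv w x; rewrite E step_inv => -[->].
Qed.

Lemma act_cat u w v : act (u ++ w) v = act w (act u v).
Proof. by elim: v u w => [|x v IH] u w //=; rewrite step_cat /= IH. Qed.

Lemma act_nil v : act [::] v = v.
Proof. by elim: v => [|x v IH] //=; rewrite IH. Qed.

Lemma act_invK w : cancel (act w) (act (inv_word w)).
Proof. by move=> v; elim: v w => [|x v IH] w //=; rewrite step_inv /= IH. Qed.

Lemma act_Kinv w : cancel (act (inv_word w)) (act w).
Proof. by move=> v; rewrite -{1}(inv_wordK w) act_invK. Qed.

Lemma act_eq_sym u w : act_eq u w -> act_eq w u.
Proof. by move=> E v. Qed.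

Lemma act_eq_trans u w z : act_eq u w -> act_eq w z -> act_eq u z.
Proof. by move=> E1 E2 v; rewrite E1 E2. Qed.

Lemma act_eq_cat u u' w w' : act_eq u u' -> act_eq w w' -> act_eq (u ++ w) (u' ++ w').
Proof. by move=> E1 E2 v; rewrite !act_cat E1 E2. Qed.

Lemma act_eq_inv u w : act_eq u w -> act_eq (inv_word u) (inv_word w).
Proof. by move=> E v; rewrite -{1}(act_Kinv w v) -E act_invK. Qed.

Lemma act_eq_conj h g g' : act_eq g g' -> act_eq (conj_word h g) (conj_word h g').
Proof. by move=> E; apply: act_eq_cat (act_eq_inv E) (act_eq_cat _ E). Qed.

Lemma act_eq_conjM h h' g :
  act_eq (conj_word (h ++ h') g) (conj_word h g ++ conj_word h' g).
Proof. by move=> v; rewrite /conj_word !act_cat act_invK. Qed.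

Lemma act_eq_conjMg h g g' : act_eq (conj_word h (g ++ g')) (conj_word (conj_word h g) g').
Proof. by move=> v; rewrite /conj_word inv_word_cat !act_cat. Qed.

Lemma conj_wordV h g : conj_word (inv_word h) g = inv_word (conj_word h g).
Proof. by rewrite /conj_word !inv_word_cat inv_wordK catA. Qed.

Definition push_letter (st : word) (g : gen) : word :=
  if st is h :: t then (if h == inv_letter g then t else g :: st) else [:: g].

(* Free reduction, with the reduced prefix kept reversed as a stack. *)
Definition reduce (w : word) : word := rev (foldl push_letter [::] w).

Lemma act_reduce w : act_eq (reduce w) w.
Proof.
suff foldE st v : act (rev (foldl push_letter st w)) v = act (rev st ++ w) v.
  by move=> v; rewrite /reduce foldE.
elim: w st => [|g w IH] st /=; first by rewrite cats0.
rewrite IH; case: st => [|h t] //=; rewrite rev_cons cat_rcons.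
case: eqP => [-> | _]; last by rewrite !rev_cons !cat_rcons.
change (inv_letter g :: g :: w) with (inv_word [:: g] ++ [:: g] ++ w).
by rewrite !act_cat act_Kinv.
Qed.

Lemma reduce_act_eq u w : reduce u = reduce w -> act_eq u w.
Proof.
move=> E; apply: act_eq_trans (act_eq_sym (act_reduce u)) _.
by rewrite E; exact: act_reduce.
Qed.

(** * Deciding equalities in G *)

Definition sections (w : word) : seq word := [seq reduce (step w x).2 | x <- letters].

Definition fixes_letters (w : word) : bool := all (fun x => (step w x).1 == x) letters.

Definition section_closed (L : seq word) : bool :=
  all (fun w => fixes_letters w && all (fun u => (u == [::]) || (u \in L)) (sections w)) L.

Lemma section_closed_trivial L w : section_closed L -> w \in L -> act_eq w [::].
Proof.
move=> /allP cL wL v; rewrite act_nil; elim: v w wL => [|x v IH] w wL //=.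
have /andP [/allP fixL /allP secL] := cL w wL.
rewrite (eqP (fixL x (mem_letters x))) -act_reduce.
have /orP [/eqP -> | /IH ->] := secL _ (map_f _ (mem_letters x)) => //.
by rewrite act_nil.
Qed.

(* Only a candidate: [trivialb] checks the result, so the fuel [n] does not matter for soundness. *)
Fixpoint section_closure (n : nat) (L : seq word) : seq word :=
  if n is n'.+1 then
    let L' := undup (L ++ [seq u <- flatten (map sections L) | u != [::]]) in
    if size L' == size L then L else section_closure n' L'
  else L.

Definition trivialb (w : word) : bool :=
  (reduce w \in section_closure 16 [:: reduce w]) &&
  section_closed (section_closure 16 [:: reduce w]).

Lemma trivialbP w : trivialb w -> act_eq w [::].
Proof.
rewrite /trivialb => /andP [wL cL]; apply: act_eq_trans (act_eq_sym (act_reduce w)) _.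
exact: section_closed_trivial cL wL.
Qed.

Lemma act_eq_trivialb u w : trivialb (u ++ inv_word w) -> act_eq u w.
Proof.
move/trivialbP=> E v.
by rewrite -[act u v](act_Kinv w) -(act_cat u) E act_nil.
Qed.

Lemma InP (T : eqType) (x : T) s : reflect (List.In x s) (x \in s).
Proof.
elim: s => [|y s IH]; first by constructor.
rewrite inE; apply: (iffP orP) => [[/eqP -> | /IH] | [-> | /IH]]; by [left | right].
Qed.

Record normal_subgroup (P : word -> Prop) : Prop := NormalSubgroup {
  normal_act_eq : forall u w, act_eq u w -> P u -> P w;
  normal_nil : P [::];
  normal_cat : forall u w, P u -> P w -> P (u ++ w);
  normal_inv : forall u, P u -> P (inv_word u);
  normal_conj : forall u g, P u -> P (conj_word u g) }.

Definition cong_mod (P : word -> Prop) (u w : word) : Prop := P (u ++ inv_word w).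

Section NormalSubgroup.
Variable P : word -> Prop.
Hypothesis nP : normal_subgroup P.

Lemma normal_comm u g : P u -> P (comm_word u g).
Proof. by move=> Pu; apply: (normal_cat nP (normal_inv nP Pu) (normal_conj nP g Pu)). Qed.

Lemma normal_flatten (T : Type) (f : T -> word) s :
  (forall x, P (f x)) -> P (flatten (map f s)).
Proof. by move=> Pf; elim: s => [|x s IH] /=; [exact: normal_nil | exact: normal_cat]. Qed.

Lemma cong_act_eq u w : act_eq u w -> cong_mod P u w.
Proof.
move=> E; apply: (normal_act_eq nP _ (normal_nil nP)) => v.
by rewrite act_nil act_cat E act_invK.
Qed.

Lemma cong_trans u w z : cong_mod P u w -> cong_mod P w z -> cong_mod P u z.
Proof.
move=> uw wz; apply: (normal_act_eq nP _ (normal_cat nP uw wz)) => v.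
by rewrite !act_cat act_Kinv.
Qed.

Lemma cong_sym u w : cong_mod P u w -> cong_mod P w u.
Proof. by move/(normal_inv nP); rewrite /cong_mod inv_word_cat inv_wordK. Qed.

Lemma cong_catr u w s : cong_mod P u w -> cong_mod P (u ++ s) (w ++ s).
Proof.
move=> uw; apply: (normal_act_eq nP _ uw) => v.
by rewrite inv_word_cat !act_cat act_invK.
Qed.

Lemma cong_catl p u w : cong_mod P u w -> cong_mod P (p ++ u) (p ++ w).
Proof.
move=> /(normal_conj nP (inv_word p)); apply: (normal_act_eq nP) => v.
by rewrite /conj_word inv_wordK inv_word_cat !act_cat.
Qed.

End NormalSubgroup.

Definition signed_word (p : word * bool) : word := if p.2 then p.1 else inv_word p.1.

Lemma inv_word_flatten_signed s :
  inv_word (flatten (map signed_word s)) =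
  flatten (map signed_word (rev (map (fun p => (p.1, ~~ p.2)) s))).
Proof.
elim: s => [|[u []] s IH] //=;
  by rewrite inv_word_cat IH rev_cons map_rcons flatten_rcons ?inv_wordK.
Qed.

Lemma act_eq_conj_flatten_signed s g :
  act_eq (conj_word (flatten (map signed_word s)) g)
         (flatten (map signed_word (map (fun p => (conj_word p.1 g, p.2)) s))).
Proof.
elim: s => [|[u b] s IH] /=; first by move=> v; rewrite /conj_word /= act_cat act_Kinv act_nil.
apply: act_eq_trans (act_eq_conjM _ _ _) (act_eq_cat _ IH).
by case: b => //=; rewrite conj_wordV.
Qed.

Section GeneratedSubgroup.
Variable S : word -> Prop.

Lemma in_gen_sub u : S u -> in_gen S u.
Proof. by exists [:: (u, true)]; split=> [p [<- | []] | v] //=; rewrite cats0. Qed.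

Lemma in_gen_min P : normal_subgroup P -> (forall u, S u -> P u) -> forall u, in_gen S u -> P u.
Proof.
move=> nP SP u [s [Ss E]]; apply: (normal_act_eq nP (act_eq_sym E)).
elim: s Ss {E} => [|[w b] s IH] Ss /=; first exact: normal_nil.
apply: (normal_cat nP _ (IH _)) => [|p sp]; last by apply: Ss; right.
have Pw := SP w (Ss _ (or_introl erefl)).
by rewrite /signed_word /=; case: ifP => // _; exact: normal_inv.
Qed.

Hypothesis S_conj : forall u g, S u -> S (conj_word u g).

Lemma in_gen_normal : normal_subgroup (in_gen S).
Proof.
split.
- by move=> u w E [s [Ss E']]; exists s; split=> //; apply: act_eq_trans (act_eq_sym E) E'.
- by exists [::].
- move=> u w [s [Ss Es]] [t [St Et]]; exists (s ++ t); split.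
    by move=> p /(List.in_app_or s t p) [/Ss | /St].
  by rewrite map_cat flatten_cat; exact: act_eq_cat.
- move=> u [s [Ss E]]; exists (rev (map (fun p => (p.1, ~~ p.2)) s)); split.
    by move=> p /InP; rewrite mem_rev => /mapP [q /InP /Ss Sq ->].
  by rewrite -[flatten _]inv_word_flatten_signed; exact: act_eq_inv.
- move=> u g [s [Ss E]]; exists (map (fun p => (conj_word p.1 g, p.2)) s); split.
    by move=> p /InP /mapP [q /InP /Ss Sq ->]; exact: S_conj.
  apply: act_eq_trans _ (act_eq_conj_flatten_signed s g) => v.
  by rewrite /conj_word !act_cat E.
Qed.

End GeneratedSubgroup.

(** * H has finite index in G *)

Notation commutator_b2c := (comm_word [:: B; B] [:: C]).

Lemma inH_normal : normal_subgroup inH.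
Proof.
apply: in_gen_normal => _ g [h ->]; exists (h ++ g).
by rewrite /conj_word inv_word_cat -!catA.
Qed.

Lemma inH_commutator : inH commutator_b2c.
Proof. by apply: in_gen_sub; exists [::]. Qed.

Lemma act_eq_A : act_eq [:: A] [:: C; B].
Proof. by apply: act_eq_trivialb; vm_compute. Qed.

Lemma act_eq_Ai : act_eq [:: Ai] [:: C; B].
Proof. by apply: act_eq_trivialb; vm_compute. Qed.

Lemma act_eq_Ci : act_eq [:: Ci] [:: C; C].
Proof. by apply: act_eq_trivialb; vm_compute. Qed.

Lemma act_eq_BC : act_eq [:: B; C] [:: C; C; Bi].
Proof. by apply: act_eq_trivialb; vm_compute. Qed.

Lemma act_eq_C3 : act_eq (nseq 3 C) [::].
Proof. by apply: act_eq_trivialb; vm_compute. Qed.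

Lemma act_eq_B2C_cube : act_eq (flatten (nseq 3 [:: B; B; C])) [::].
Proof. by apply: act_eq_trivialb; vm_compute. Qed.

Local Notation congH := (cong_mod inH).

Lemma congH_refl u : congH u u.
Proof. exact: cong_act_eq inH_normal _ _ (fun v => erefl). Qed.

Lemma congH_B2C : congH [:: B; B; C] [:: C; B; B].
Proof.
apply: (normal_act_eq inH_normal _ (normal_conj inH_normal [:: Ci; Bi; Bi] inH_commutator)).
exact: reduce_act_eq.
Qed.

Lemma congH_even_B_C k : congH (nseq k.*2 B ++ [:: C]) (C :: nseq k.*2 B).
Proof.
elim: k => [|k IH]; first exact: congH_refl.
apply: (cong_trans inH_normal (cong_catl inH_normal [:: B; B] IH)).
exact: (cong_catr inH_normal (nseq k.*2 B) congH_B2C).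
Qed.

Lemma congH_even_B_C_ctx p k s :
  congH (p ++ nseq k.*2 B ++ C :: s) (p ++ C :: nseq k.*2 B ++ s).
Proof.
apply: (cong_catl inH_normal).
by rewrite -cat_rcons -cats1; exact: (cong_catr inH_normal _ (congH_even_B_C k)).
Qed.

Lemma congH_B2C_pow n : congH (flatten (nseq n [:: B; B; C])) (nseq n.*2 B ++ nseq n C).
Proof.
elim: n => [|n IH]; first exact: congH_refl.
apply: (cong_trans inH_normal (cong_catl inH_normal [:: B; B; C] IH)).
rewrite doubleS /= -cat1s.
apply: (cong_sym inH_normal); exact: congH_even_B_C_ctx [:: B; B] n (nseq n C).
Qed.

Lemma congH_B6 : congH (nseq 6 B) [::].
Proof.
have C3E : act_eq (nseq 6 B) (nseq 6 B ++ nseq 3 C).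
  by move=> v; rewrite act_cat act_eq_C3 act_nil.
apply: (cong_trans inH_normal (cong_act_eq inH_normal C3E)).
apply: (cong_trans inH_normal (cong_sym inH_normal (congH_B2C_pow 3))).
exact: (cong_act_eq inH_normal act_eq_B2C_cube).
Qed.

Lemma congH_Bi : congH [:: Bi] (nseq 5 B).
Proof.
apply: (cong_trans inH_normal (cong_catl inH_normal [:: Bi] (cong_sym inH_normal congH_B6))).
exact: (cong_act_eq inH_normal (reduce_act_eq _)).
Qed.

Definition coset_rep (i j : nat) : word := nseq i C ++ nseq j B.

Lemma nseqSr (T : Type) n (x : T) : nseq n.+1 x = nseq n x ++ [:: x].
Proof. by rewrite -addn1 nseqD. Qed.

Lemma congH_rep_B i j : congH (coset_rep i j ++ [:: B]) (coset_rep i j.+1).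
Proof. by rewrite /coset_rep nseqSr catA; exact: congH_refl. Qed.

Lemma congH_rep_C_even i k : congH (coset_rep i k.*2 ++ [:: C]) (coset_rep i.+1 k.*2).
Proof.
have := congH_even_B_C_ctx (nseq i C) k [::].
by rewrite /coset_rep nseqSr cats0 -!catA.
Qed.

(* c^i b^(2k+1) c = c^i b^2k c^2 b^-1 in G; then b^2k moves past both c's and b^-1 = b^5 mod H. *)
Lemma congH_rep_C_odd i k :
  congH (coset_rep i k.*2.+1 ++ [:: C]) (coset_rep i.+2 (k.*2 + 5)).
Proof.
set p := nseq i C; set b := nseq k.*2 B.
have -> : coset_rep i k.*2.+1 ++ [:: C] = p ++ b ++ [:: B; C].
  by rewrite /coset_rep nseqSr -!catA.
have -> : coset_rep i.+2 (k.*2 + 5) = p ++ C :: C :: b ++ nseq 5 B.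
  by rewrite /coset_rep -addn2 !nseqD -!catA.
have BCE : act_eq (p ++ b ++ [:: B; C]) (p ++ b ++ [:: C; C; Bi]).
  by apply: act_eq_cat (act_eq_cat _ act_eq_BC).
apply: (cong_trans inH_normal (cong_act_eq inH_normal BCE)).
apply: (cong_trans inH_normal (congH_even_B_C_ctx p k [:: C; Bi])).
have := congH_even_B_C_ctx (p ++ [:: C]) k [:: Bi]; rewrite -!catA => /= CE.
apply: (cong_trans inH_normal CE).
by have := cong_catl inH_normal (p ++ C :: C :: b) congH_Bi; rewrite -!catA.
Qed.

Lemma congH_rep_BC i j g :
  g \in [:: B; C] -> exists i' j', congH (coset_rep i j ++ [:: g]) (coset_rep i' j').
Proof.
rewrite !inE => /orP [/eqP -> | /eqP ->]; first by exists i, j.+1; exact: congH_rep_B.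
rewrite -(odd_double_half j); case: (odd j); rewrite ?add0n ?add1n.
- by exists i.+2, (j./2.*2 + 5); exact: congH_rep_C_odd.
- by exists i.+1, j./2.*2; exact: congH_rep_C_even.
Qed.

Lemma congH_rep_cat i j u :
  all (mem [:: B; C]) u -> exists i' j', congH (coset_rep i j ++ u) (coset_rep i' j').
Proof.
elim: u i j => [|g u IH] i j /=; first by exists i, j; rewrite cats0; exact: congH_refl.
case/andP=> gBC /IH uBC; have [i1 [j1 E1]] := congH_rep_BC i j gBC.
have [i2 [j2 E2]] := uBC i1 j1; exists i2, j2.
rewrite -cat1s catA; exact: (cong_trans inH_normal (cong_catr inH_normal u E1) E2).
Qed.

Definition positive_form (g : gen) : word :=
  match g with
  | A | Ai => [:: C; B]
  | B => [:: B]
  | C => [:: C]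
  | Bi => nseq 5 B
  | Ci => [:: C; C]
  end.

Lemma congH_positive_form g : congH [:: g] (positive_form g).
Proof.
case: g; try exact: congH_refl.
- exact: (cong_act_eq inH_normal act_eq_A).
- exact: (cong_act_eq inH_normal act_eq_Ai).
- exact: congH_Bi.
- exact: (cong_act_eq inH_normal act_eq_Ci).
Qed.

Lemma coset_rep_exists w : exists i j, congH w (coset_rep i j).
Proof.
elim/last_ind: w => [|w g [i [j E]]]; first by exists 0, 0; exact: congH_refl.
have gBC : all (mem [:: B; C]) (positive_form g) by case: g.
have [i' [j' E']] := congH_rep_cat i j gBC.
exists i', j'; rewrite -cats1.
apply: (cong_trans inH_normal (cong_catr inH_normal _ E)).
exact: (cong_trans inH_normal (cong_catl inH_normal _ (congH_positive_form g)) E').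
Qed.

Lemma congH_rep_mod i j : congH (coset_rep i j) (coset_rep (i %% 3) (j %% 6)).
Proof.
have C3 m : act_eq (nseq (m * 3) C) [::].
  by elim: m => [|m IH] v //; rewrite mulSn nseqD act_cat act_eq_C3 act_nil IH act_nil.
have B6 m : congH (nseq (m * 6) B) [::].
  elim: m => [|m IH]; first exact: congH_refl.
  by rewrite mulSn nseqD; exact: (cong_trans inH_normal (cong_catr inH_normal _ congH_B6) IH).
rewrite /coset_rep {1}(divn_eq i 3) {1}(divn_eq j 6) !nseqD -catA.
apply: (cong_trans inH_normal (cong_act_eq inH_normal (act_eq_cat (C3 _) (fun v => erefl)))).
exact: (cong_catl inH_normal _ (cong_catr inH_normal _ (B6 _))).
Qed.

Lemma finite_index_H : finite_index inH.
Proof.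
exists [seq coset_rep i j | i <- iota 0 3, j <- iota 0 6] => w.
have [i [j E]] := coset_rep_exists w.
exists (coset_rep (i %% 3) (j %% 6)); split.
  by apply/InP/allpairs_f; rewrite mem_iota ltn_pmod.
exact: (cong_trans inH_normal E (congH_rep_mod i j)).
Qed.

(** * Rigid lifts of the elements of H *)

Definition supported_at (h : word) (x : 'I_6) (u : word) : Prop :=
  forall y v, act h (y :: v) = y :: (if y == x then act u v else v).

Lemma supported_at_act_eq h x u u' :
  act_eq u u' -> supported_at h x u -> supported_at h x u'.
Proof. by move=> E S y v; rewrite S E. Qed.

Lemma supported_at_nil x : supported_at [::] x [::].
Proof. by move=> y v; rewrite !act_nil; case: ifP. Qed.

Lemma supported_at_cat h1 h2 x u1 u2 :
  supported_at h1 x u1 -> supported_at h2 x u2 -> supported_at (h1 ++ h2) x (u1 ++ u2).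
Proof. by move=> S1 S2 y v; rewrite act_cat S1 S2; case: eqP; rewrite ?act_cat. Qed.

Lemma supported_at_inv h x u :
  supported_at h x u -> supported_at (inv_word h) x (inv_word u).
Proof.
move=> S y v; apply: (can_inj (act_invK h)); rewrite act_Kinv S.
by case: eqP; rewrite ?act_Kinv.
Qed.

Lemma supported_at_conj h x u t :
  supported_at h x u ->
  supported_at (conj_word h t) (step t x).1 (conj_word u (step t x).2).
Proof.
move=> S y v.
have [z [w E]] : exists z w, y :: v = act t (z :: w).
  by exists (step (inv_word t) y).1, (act (step (inv_word t) y).2 v); rewrite -[LHS](act_Kinv t).
rewrite [in LHS]E /conj_word !act_cat act_invK S /=.
move: E => /= [-> ->]; rewrite eq_step_fst.
by case: eqP => [-> | _] //; rewrite act_invK.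
Qed.

Lemma supported_at_flatten (f u : 'I_6 -> word) :
  (forall x, supported_at (f x) x (u x)) ->
  forall x v, act (flatten (map f letters)) (x :: v) = x :: act (u x) v.
Proof.
move=> Sf x.
suff flatE s : uniq s ->
    forall v, act (flatten (map f s)) (x :: v) = x :: (if x \in s then act (u x) v else v).
  by move=> v; rewrite flatE ?letters_uniq ?mem_letters.
elim: s => [|y s IH]; first by move=> _ v; rewrite act_nil.
move=> /andP [ys /IH {}IH] v.
rewrite (_ : flatten (map f (y :: s)) = f y ++ flatten (map f s)) // act_cat Sf inE.
by case: (eqVneq x y) ys => [<- /negbTE xs | _ _]; rewrite IH ?xs.
Qed.

Definition supportedb (h : word) (x : 'I_6) : bool :=
  all (fun y => ((step h y).1 == y) && ((y == x) || trivialb (step h y).2)) letters.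

Lemma supportedbP h x : supportedb h x -> supported_at h x (step h x).2.
Proof.
move=> /allP Sb y v /=; have /andP [/eqP -> T] := Sb y (mem_letters y).
case: eqP T => [-> // | _ /= /trivialbP T].
by rewrite T act_nil.
Qed.

Definition liftable (x : 'I_6) (u : word) : Prop := exists2 h, inH h & supported_at h x u.

Definition lift_letter (g : gen) : word :=
  match g with
  | A | Ai => [:: C; B; B; B; B; Ci]
  | B => [:: B]
  | Bi => [:: Bi]
  | C => [:: C; Bi; Bi; Bi; C]
  | Ci => [:: Ci; B; B; B; Ci]
  end.

Lemma lift_letterP g :
  (step (lift_letter g) ord0).1 = ord0 /\ act_eq (step (lift_letter g) ord0).2 [:: g].
Proof. by case: g; (split; [apply/eqP; vm_compute | apply: act_eq_trivialb; vm_compute]). Qed.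

Lemma liftable_normal : normal_subgroup (liftable ord0).
Proof.
split.
- by move=> u w E [h Hh S]; exists h => //; exact: supported_at_act_eq E S.
- by exists [::]; [exact: normal_nil inH_normal | exact: supported_at_nil].
- move=> u w [h1 H1 S1] [h2 H2 S2]; exists (h1 ++ h2).
    exact: normal_cat inH_normal _ _ H1 H2.
  exact: supported_at_cat.
- move=> u [h Hh S]; exists (inv_word h); first exact: normal_inv inH_normal _ Hh.
  exact: supported_at_inv.
- move=> u g Lu; elim/last_ind: g => [|g s [h Hh S]].
    by rewrite /conj_word /= cats0.
  exists (conj_word h (lift_letter s)); first exact: normal_conj inH_normal _ _ Hh.
  have [fixE secE] := lift_letterP s.
  have := supported_at_conj (lift_letter s) S; rewrite fixE; apply: supported_at_act_eq.
  apply: act_eq_trans (act_eq_conj _ secE) _.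
  by rewrite -cats1; exact: act_eq_sym (act_eq_conjMg _ _ _).
Qed.

(* b^8 = <<b^8,1,1,c^2,1,1>>, and [h] fixes the vertices 1 and 4, with a section at 1
   commuting with b^8 and the section c^2 b^2 c at 4. Hence
   [h, b^8] = <<1,1,1,[c^2 b^2 c, c^2],1,1>> = <<1,1,1,[b^2,c]^-1,1,1>>, and conjugating
   by c^2 b c^2 moves the vertex 4 to the vertex 1 with trivial section. *)
Definition rigid_commutator : word :=
  let h := conj_word commutator_b2c [:: C; B; B; B] ++
           conj_word commutator_b2c [:: C; Bi; Bi; Bi] in
  conj_word (inv_word (comm_word h (nseq 8 B))) [:: C; C; B; C; C].

Lemma inH_rigid_commutator : inH rigid_commutator.
Proof.
have conjH g := normal_conj inH_normal g inH_commutator.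
apply/(normal_conj inH_normal)/(normal_inv inH_normal)/(normal_comm inH_normal).
exact: (normal_cat inH_normal (conjH _) (conjH _)).
Qed.

Lemma supported_rigid_commutator :
  supported_at rigid_commutator ord0 commutator_b2c.
Proof.
have Sb : supportedb rigid_commutator ord0 by vm_compute.
apply: supported_at_act_eq (supportedbP Sb).
by apply: act_eq_trivialb; vm_compute.
Qed.

Lemma liftable_inH u : inH u -> liftable ord0 u.
Proof.
move=> Hu; apply: (in_gen_min liftable_normal _ Hu) => _ [g ->].
apply: (normal_conj liftable_normal).
by exists rigid_commutator; [exact: inH_rigid_commutator | exact: supported_rigid_commutator].
Qed.

Definition transporter (x : 'I_6) : word :=
  nth [::] [:: [::]; [:: C]; [:: C; C]; [:: C; A; C; C]; [:: C; A]; [:: C; A; C]] x.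

Lemma transporterP x : (step (transporter x) ord0).1 = x.
Proof.
suff /allP P : all (fun x => (step (transporter x) ord0).1 == x) letters.
  exact/eqP/P/mem_letters.
by vm_compute.
Qed.

Lemma liftable_at x u : inH u -> liftable x u.
Proof.
move=> Hu; set t := transporter x; set s := (step t ord0).2.
have [h Hh S] := liftable_inH (normal_conj inH_normal (inv_word s) Hu).
exists (conj_word h t); first exact: (normal_conj inH_normal t Hh).
have := supported_at_conj t S; rewrite transporterP; apply: supported_at_act_eq.
by move=> v; rewrite /conj_word inv_wordK !act_cat !act_Kinv.
Qed.

Lemma branching_H (hs : 'I_6 -> word) : (forall x, inH (hs x)) ->
  exists h : word, inH h /\ forall x v, act h (x :: v) = x :: act (hs x) v.
Proof.
move=> Hhs; have [f Hf Sf] := fin_all_exists2 (fun x => liftable_at x (Hhs x)).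
exists (flatten (map f letters)); split; first exact: (normal_flatten inH_normal _ Hf).
exact: supported_at_flatten Sf.
Qed.

Theorem proposition11p6 : regular_branch_over inH.
Proof. by split; [exact: finite_index_H | exact: branching_H]. Qed.
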